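(* Let the setting of the context hold. If $\boldsymbol{\alpha}\in\mathbb{R}^n$ has all entries positive and $\varphi(\boldsymbol{\alpha})=\lambda\boldsymbol{\alpha}$ for some real $\lambda$, then $\lambda=1$. In other words, $\varphi$ can only have $1$ as an eigenvalue corresponding to a positive eigenvector.
   Context: There are $n$ participants. Participant $i$ bears a loss $X_i$, a non-negative random variable, not almost surely constant. Let $\max[X_i]=\sup\{x: P(X_i\le x)<1\}$, assume $\sum_{i=1}^n\max[X_i]<\infty$. Let $S=\sum_{i=1}^nX_i$ and $A=[0,\sum_{i=1}^n\max[X_i]]$. Each participant has a disutility $v_i:[0,\max[X_i])\to\mathbb{R}$ that is $C^2$, increasing, strictly convex, with $\lim_{s\to0}v_i'(s)=0$ and $\lim_{s\to\max[X_i]}v_i'(s)=\infty$. Let $I_i:[0,\infty)\to[0,\max[X_i])$ be the inverse of $v_i'$. Let $\mathcal{K}$ be the set of functions $g:A\to\mathbb{R}_+$ with $g(0)=0$, strictly increasing. $\varphi_1:\mathbb{R}_+^n\to\mathcal{K}$: if all $\alpha_i>0$, $(\varphi_1(\boldsymbol{\alpha}))(s)=J(s,\boldsymbol{\alpha})$ where $J(\cdot,\boldsymbol{\alpha})$ is the inverse of $z\mapsto\sum_{i=1}^nI_i(z/\alpha_i)$, i.e. $\sum_iI_i(J(s,\boldsymbol{\alpha})/\alpha_i)=s$; otherwise $\varphi_1(\boldsymbol{\alpha})=0$. $\varphi_2:\mathcal{K}\to\mathbb{R}_+^n$: if $J\ne0$, $(\varphi_2(J))_i$ is the unique $\alpha_i>0$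 with $E[I_i(J(S)/\alpha_i)]=E[X_i]$; if $J=0$, $\varphi_2(J)=0$. $\varphi=\varphi_2\circ\varphi_1:\mathbb{R}_+^n\to\mathbb{R}_+^n$. *)

From HB Require Import structures.
From mathcomp Require Import all_boot all_order all_algebra.
From mathcomp Require Import all_classical all_reals all_analysis.
Set Implicit Arguments. Unset Strict Implicit. Unset Printing Implicit Defensive.
Import Order.TTheory GRing.Theory Num.Theory.
Import numFieldNormedType.Exports.
Local Open Scope classical_set_scope.
Local Open Scope ring_scope.

Section Setting.
Context {R : realType} {d : measure_display} {T : measurableType d}.
Variable (P : probability T R) (n : nat).

Definition maxrv (Y : T -> R) : R := sup [set x : R | (P [set t | (Y t <= x)%R] < 1)%E].

(* the set {x | P(Y <= x) < 1}; max[Y] finite iff it is bounded above *)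
Definition maxrv_set (Y : T -> R) : set R := [set x : R | (P [set t | (Y t <= x)%R] < 1)%E].

(* derivative of v on [0, M): v'(0) := 0 = lim_{s->0+} v'(s) *)
Definition dv (v : R -> R) (s : R) : R := if s == 0 then 0 else derive1 v s.

Definition disutility (v : R -> R) (M : R) : Prop :=
  {within `[0, M[, continuous v} /\
  (forall s, 0 < s < M -> derivable v s 1 /\ derivable (derive1 v) s 1) /\
  (forall s, 0 < s < M -> {for s, continuous (derive1 (derive1 v))}) /\
  (exists l : R, derive1 (derive1 v) x @[x --> 0^'+] --> l) /\
  (forall x y, 0 <= x -> x < y -> y < M -> v x < v y) /\
  (forall x y t, 0 <= x -> x < y -> y < M -> 0 < t < 1 ->
     v (t * x + (1 - t) * y) < t * v x + (1 - t) * v y) /\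
  (derive1 v x @[x --> 0^'+] --> 0) /\
  (derive1 v x @[x --> M^'-] --> +oo).

Definition Iinv (v : R -> R) (M : R) (y : R) : R :=
  xget 0 [set s : R | 0 <= s < M /\ dv v s = y].

(* extension of I to [0, +oo] by I(+oo) := M = lim_{y -> oo} I(y) *)
Definition Ibar (v : R -> R) (M : R) (z : \bar R) : R :=
  match z with
  | r%:E => Iinv v M r
  | +oo%E => M
  | -oo%E => 0
  end.

Variables (X : 'I_n -> T -> R) (v : 'I_n -> R -> R).

Definition Mx (i : 'I_n) : R := maxrv (X i).
Definition Ssum (t : T) : R := \sum_(i < n) X i t.
Definition I_ (i : 'I_n) : \bar R -> R := Ibar (v i) (Mx i).

(* J = phi_1(alpha), as a graph relation (J : A -> [0, +oo]) *)
Definition phi1_graph (alpha : 'I_n -> R) (J : R -> \bar R) : Prop :=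
  ((forall i, 0 < alpha i) ->
     forall s, 0 <= s <= \sum_(i < n) Mx i ->
       (0 <= J s)%E /\ \sum_(i < n) I_ i (J s * ((alpha i)^-1)%:E)%E = s) /\
  (~ (forall i, 0 < alpha i) ->
     forall s, 0 <= s <= \sum_(i < n) Mx i -> J s = 0%E).

Definition expect_eq (J : R -> \bar R) (i : 'I_n) (c : R) : Prop :=
  (\int[P]_t (I_ i (J (Ssum t) * (c^-1)%:E)%E)%:E = \int[P]_t (X i t)%:E)%E.

Definition phi2_graph (J : R -> \bar R) (beta : 'I_n -> R) : Prop :=
  let Jzero := forall s, 0 <= s <= \sum_(i < n) Mx i -> J s = 0%E in
  (Jzero -> forall i, beta i = 0) /\
  (~ Jzero -> forall i, 0 < beta i /\ expect_eq J i (beta i) /\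
                 forall c, 0 < c -> expect_eq J i c -> c = beta i).

(* phi = phi_2 o phi_1 as a graph: phi(alpha) = beta *)
Definition phi_graph (alpha beta : 'I_n -> R) : Prop :=
  exists J, phi1_graph alpha J /\ phi2_graph J beta.

End Setting.

(* Write J = phi_1(alpha) and E_i(c) = E[I_i(J(S)/c)]. Strict convexity makes each v_i'
   strictly increasing, so its inverse I_i is nondecreasing and E_i is nonincreasing in c.
   Since sum_i I_i(J(s)/alpha_i) = s on A and S <= sum_i max[X_i] almost surely,
   sum_i E_i(alpha_i) = E[S] = sum_i E[X_i] = sum_i E_i(lambda alpha_i), the last equality
   being the defining property of phi_2(J) = lambda alpha (which also forces lambda > 0).
   If lambda >= 1 each E_i(lambda alpha_i) is at most E_i(alpha_i), and at least if
   lambda < 1, so the equality of the sums forces E_i(alpha_i) = E[X_i] for every i;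
   uniqueness in the definition of phi_2 then gives alpha_i = lambda alpha_i. *)

From HB Require Import structures.
From mathcomp Require Import all_boot all_order all_algebra.
From mathcomp Require Import all_classical all_reals all_analysis.
From mathcomp Require Import ring lra measurable_realfun.
Import Order.TTheory GRing.Theory Num.Theory.
Import numFieldNormedType.Exports.
Local Open Scope classical_set_scope.
Local Open Scope ring_scope.

Section DifferenceQuotient.
Context {R : realType} {f : R -> R} {x : R}.
Hypothesis fx : derivable f x 1.

Let quotient_cvg : (fun h => h^-1 * (f (h + x) - f x)) @ 0^' --> derive1 f x.
Proof.
rewrite /derive1; have -> : (fun h => h^-1 * (f (h + x) - f x)) =
          (fun h => h^-1 *: ((f \o shift x) (h *: 1) - f x)).
  by apply/funext => h /=; rewrite /GRing.scale/= mulr1.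
exact: fx.
Qed.

Lemma derive1_quotient_at_right :
  (fun h => h^-1 * (f (h + x) - f x)) @ 0^'+ --> derive1 f x.
Proof. by apply: cvg_trans quotient_cvg; apply: cvg_app; apply: within_subset => h /gt_eqF ->. Qed.

Lemma derive1_quotient_at_left :
  (fun h => h^-1 * (f (h + x) - f x)) @ 0^'- --> derive1 f x.
Proof. by apply: cvg_trans quotient_cvg; apply: cvg_app; apply: within_subset => h /lt_eqF ->. Qed.

End DifferenceQuotient.

Section StrictlyConvex.
Context {R : realType} {v : R -> R} {M : R}.
Hypothesis v_convex : forall x y t, 0 <= x -> x < y -> y < M -> 0 < t < 1 ->
  v (t * x + (1 - t) * y) < t * v x + (1 - t) * v y.

Lemma strictly_convex_slopes x m y : 0 <= x -> x < m -> m < y -> y < M ->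
  (v m - v x) / (m - x) < (v y - v x) / (y - x) /\
  (v y - v x) / (y - x) < (v y - v m) / (y - m).
Proof.
move=> x0 xm my yM.
set a := m - x; set b := y - m.
have a0 : 0 < a by rewrite subr_gt0.
have b0 : 0 < b by rewrite subr_gt0.
have ab0 : 0 < a + b by rewrite addr_gt0.
have -> : y - x = a + b by rewrite /a /b; ring.
set t := b / (a + b).
have t01 : 0 < t < 1 by rewrite divr_gt0 //= ltr_pdivrMr // mul1r ltrDr.
have mE : t * x + (1 - t) * y = m.
  have -> : t = (y - m) / (y - x) by rewrite /t /a /b; congr (_ / _); ring.
  by field; rewrite subr_eq0 gt_eqF // (lt_trans xm my).
have chord : (a + b) * v m < b * v x + a * v y.
  have := v_convex _ _ _ x0 (lt_trans xm my) yM t01; rewrite mE.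
  have -> : b * v x + a * v y = (a + b) * (t * v x + (1 - t) * v y).
    by rewrite /t; field; exact: lt0r_neq0.
  by rewrite ltr_pM2l.
have [an0 bn0 abn0] : [/\ a != 0, b != 0 & a + b != 0] by split; exact: lt0r_neq0.
split; rewrite -subr_gt0.
- have -> : (v y - v x) / (a + b) - (v m - v x) / a =
            (b * v x + a * v y - (a + b) * v m) / (a * (a + b)) by field; rewrite an0 abn0.
  by rewrite divr_gt0 ?mulr_gt0 // subr_gt0.
- have -> : (v y - v m) / b - (v y - v x) / (a + b) =
            (b * v x + a * v y - (a + b) * v m) / (b * (a + b)) by field; rewrite bn0 abn0.
  by rewrite divr_gt0 ?mulr_gt0 // subr_gt0.
Qed.

Lemma derive1_lt_slope x y : 0 < x -> x < y -> y < M -> derivable v x 1 ->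
  derive1 v x < (v y - v x) / (y - x).
Proof.
move=> x0 xy yM vx.
set m := (x + y) / 2.
have xm : x < m by rewrite /m; lra.
have my : m < y by rewrite /m; lra.
have [+ _] := strictly_convex_slopes _ _ _ (ltW x0) xm my yM; apply: le_lt_trans.
move: (derive1_quotient_at_right vx) => /cvgr_to_le; apply.
near=> h.
have h0 : 0 < h by near: h; exact: nbhs_right_gt.
have hm : h < m - x by near: h; apply: nbhs_right_lt; rewrite subr_gt0.
have [+ _] := @strictly_convex_slopes x (h + x) m (ltW x0) (ltac:(lra)) (ltac:(lra))
  (lt_trans my yM).
by rewrite addrK mulrC => /ltW.
Unshelve. all: by end_near.
Qed.

Lemma slope_lt_derive1 x y : 0 <= x -> x < y -> y < M -> derivable v y 1 ->
  (v y - v x) / (y - x) < derive1 v y.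
Proof.
move=> x0 xy yM vy.
set m := (x + y) / 2.
have xm : x < m by rewrite /m; lra.
have my : m < y by rewrite /m; lra.
have [_] := strictly_convex_slopes _ _ _ x0 xm my yM; move/lt_le_trans; apply.
move: (derive1_quotient_at_left vy) => /cvgr_to_ge; apply.
near=> h.
have h0 : h < 0 by near: h; exact: nbhs_left_lt.
have hm : m - y < h by near: h; apply: nbhs_left_gt; rewrite subr_lt0.
have [_ +] := @strictly_convex_slopes m (h + y) y (ltac:(lra)) (ltac:(lra)) (ltac:(lra)) yM.
have -> : (v y - v (h + y)) / (y - (h + y)) = h^-1 * (v (h + y) - v y).
  by rewrite (_ : y - (h + y) = - h); [field; rewrite lt_eqF | ring].
by move/ltW.
Unshelve. all: by end_near.
Qed.

Lemma derive1_strictly_increasing x y : 0 < x -> x < y -> y < M ->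
  derivable v x 1 -> derivable v y 1 -> derive1 v x < derive1 v y.
Proof.
move=> x0 xy yM vx vy; apply: lt_trans (derive1_lt_slope _ _ x0 xy yM vx) _.
exact: slope_lt_derive1 _ _ (ltW x0) xy yM vy.
Qed.

End StrictlyConvex.

Lemma Iinv_bound {R : realType} (v : R -> R) (M r : R) : 0 <= M -> 0 <= Iinv v M r <= M.
Proof.
move=> M0; rewrite /Iinv; case: xgetP => [s _ [/andP[s0 sM] _]|_].
  by rewrite s0 ltW.
by rewrite lexx M0.
Qed.

Lemma Ibar_bound {R : realType} (v : R -> R) (M : R) (z : \bar R) :
  0 <= M -> 0 <= Ibar v M z <= M.
Proof. by move=> M0; case: z => [r||] /=; rewrite ?Iinv_bound ?lexx ?M0. Qed.

Section MarginalDisutility.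
Context {R : realType} (v : R -> R) (M : R).
Hypothesis M_gt0 : 0 < M.
Hypothesis v_increasing : forall x y, 0 <= x -> x < y -> y < M -> v x < v y.
Hypothesis v_convex : forall x y t, 0 <= x -> x < y -> y < M -> 0 < t < 1 ->
  v (t * x + (1 - t) * y) < t * v x + (1 - t) * v y.
Hypothesis v_derivable : forall s, 0 < s < M -> derivable v s 1.
Hypothesis dv_derivable : forall s, 0 < s < M -> derivable (derive1 v) s 1.
Hypothesis dv_at0 : derive1 v x @[x --> 0^'+] --> 0.
Hypothesis dv_atM : derive1 v x @[x --> M^'-] --> +oo.

Lemma dv_strictly_increasing x y : 0 <= x -> x < y -> y < M -> dv v x < dv v y.
Proof.
move=> x0 xy yM.
have y0 : 0 < y := le_lt_trans x0 xy.
have vy : derivable v y 1 by apply: v_derivable; rewrite y0.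
rewrite /dv (gt_eqF y0); have [_|xn0] := eqVneq x 0.
  apply: lt_trans _ (slope_lt_derive1 v_convex _ _ (lexx 0) y0 yM vy).
  by rewrite divr_gt0 ?subr_gt0 ?subr0 // v_increasing.
have {x0 xn0} x0 : 0 < x by rewrite lt_neqAle eq_sym xn0.
apply: (derive1_strictly_increasing v_convex) => //.
by apply: v_derivable; rewrite x0 (lt_trans xy yM).
Qed.

Lemma dv_surjective r : 0 <= r -> exists2 s, 0 <= s < M & dv v s = r.
Proof.
rewrite le_eqVlt => /predU1P[<-|r0].
  by exists 0; rewrite ?lexx ?M_gt0 // /dv eqxx.
have : \forall s \near 0^'+, (0 < s < M) /\ derive1 v s < r.
  near=> s; split; [apply/andP; split|]; near: s.
  - exact: nbhs_right_gt.
  - exact: nbhs_right_lt.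
  - by move/cvgr_lt: dv_at0; apply.
move/filter_ex => [s1 [/andP[s10 s1M] s1r]].
have : \forall s \near M^'-, (0 < s < M) /\ r < derive1 v s.
  near=> s; split; [apply/andP; split|]; near: s.
  - exact: nbhs_left_gt.
  - exact: nbhs_left_lt.
  - by move/cvgryPgt : dv_atM; apply.
move/filter_ex => [s2 [/andP[s20 s2M] s2r]].
have vs1 : derivable v s1 1 by apply: v_derivable; rewrite s10 s1M.
have vs2 : derivable v s2 1 by apply: v_derivable; rewrite s20 s2M.
have s12 : s1 <= s2.
  rewrite leNgt; apply/negP => s21.
  have := derive1_strictly_increasing v_convex _ _ s20 s21 s1M vs2 vs1.
  by rewrite ltNge (ltW (lt_trans s1r s2r)).
have dv_cont : {within `[s1, s2], continuous (derive1 v)}.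
  apply: derivable_within_continuous => z; rewrite in_itv /= => /andP[z1 z2].
  by apply: dv_derivable; rewrite (lt_le_trans s10 z1) (le_lt_trans z2 s2M).
have [|c] := IVT s12 dv_cont (v := r).
  by rewrite ge_min le_max (ltW s1r) (ltW s2r) orbT.
rewrite in_itv /= => /andP[c1 c2] dc.
have c0 : 0 < c := lt_le_trans s10 c1.
by exists c; rewrite ?(ltW c0) ?(le_lt_trans c2 s2M) // /dv gt_eqF.
Unshelve. all: by end_near.
Qed.

Lemma Iinv_spec r : 0 <= r -> 0 <= Iinv v M r < M /\ dv v (Iinv v M r) = r.
Proof.
move=> r0; have [s sM dvs] := dv_surjective _ r0.
by case: (@xgetPex _ 0 [set s | 0 <= s < M /\ dv v s = r]); first by exists s.
Qed.

Lemma Iinv_nondecreasing a b : 0 <= a -> a <= b -> Iinv v M a <= Iinv v M b.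
Proof.
move=> a0 ab; have [/andP[ia0 iaM] dva] := Iinv_spec _ a0.
have [/andP[ib0 ibM] dvb] := Iinv_spec _ (le_trans a0 ab).
rewrite leNgt; apply/negP => ba.
by have := dv_strictly_increasing _ _ ib0 ba iaM; rewrite dva dvb ltNge ab.
Qed.

Lemma Ibar_nondecreasing (a b : \bar R) : (0 <= a)%E -> (a <= b)%E ->
  Ibar v M a <= Ibar v M b.
Proof.
case: a => [a||] //; case: b => [b||] //= a0 ab.
- exact: Iinv_nondecreasing.
- by case/andP: (Iinv_bound v M a (ltW M_gt0)).
Qed.

End MarginalDisutility.

Lemma disutility_Ibar_nondecreasing {R : realType} {v : R -> R} {M : R} :
  disutility v M -> 0 < M ->
  forall a b : \bar R, (0 <= a)%E -> (a <= b)%E -> Ibar v M a <= Ibar v M b.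
Proof.
move=> [_ [vd [_ [_ [vi [vc [d0 dM]]]]]]] M0 a b.
by apply: Ibar_nondecreasing => // s /vd[].
Qed.

Section MaxOfRandomVariable.
Context {R : realType} {d : measure_display} {T : measurableType d}.
Variable P : probability T R.

Lemma measurable_sublevel (Y : T -> R) x : measurable_fun setT Y ->
  measurable [set t | Y t <= x].
Proof. by move=> mY; rewrite -[X in measurable X]setTI; exact: measurable_fun_le. Qed.

Lemma probability_ae1 (A : set T) : measurable A -> (\forall t \ae P, A t) -> P A = 1%E.
Proof.
move=> mA [N [mN PN0 AN]]; have mAc := measurableC mA.
by rewrite -[A]setCK probability_setC // (subset_measure0 mAc mN AN PN0) sube0.
Qed.

Lemma ae_le_maxrv (Y : T -> R) : measurable_fun setT Y -> has_ubound (maxrv_set P Y) ->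
  \forall t \ae P, Y t <= maxrv P Y.
Proof.
move=> mY ubY.
have le_above x : maxrv P Y < x -> \forall t \ae P, Y t <= x.
  move=> Yx; have mYx := measurable_sublevel _ x mY.
  exists (~` [set t | Y t <= x]); split => //; first exact: measurableC.
  rewrite probability_setC //; suff -> : P [set t | Y t <= x] = 1%E by rewrite subee.
  apply/eqP; rewrite eq_le probability_le1 //= leNgt; apply/negP => /(ub_le_sup ubY).
  by rewrite leNgt Yx.
have /ae_foralln : forall k, \forall t \ae P, Y t <= maxrv P Y + k.+1%:R^-1.
  by move=> k; apply: le_above; rewrite ltrDl invr_gt0 ltr0n.
apply: filterS => t Yt; rewrite leNgt; apply/negP => /ltr_add_invr[k].
by rewrite ltNge Yt.
Qed.

Lemma maxrv_gt0 (Y : T -> R) : measurable_fun setT Y -> has_ubound (maxrv_set P Y) ->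
  (forall t, 0 <= Y t) -> ~ (exists c : R, P [set t | Y t = c] = 1%E) -> 0 < maxrv P Y.
Proof.
move=> mY ubY Y0 Ynonconst; rewrite ltNge; apply/negP => max_le0; apply: Ynonconst.
exists 0; have -> : [set t | Y t = 0] = [set t | Y t <= 0].
  by apply/seteqP; split => t /=; [move->|move=> Yt; apply/eqP; rewrite eq_le Yt Y0].
apply: probability_ae1; first exact: measurable_sublevel.
by apply: filterS _ (ae_le_maxrv _ mY ubY) => t /le_trans; apply.
Qed.

Lemma ae_Ssum_le_sum_maxrv {n : nat} {X : 'I_n -> T -> R} :
  (forall i, measurable_fun setT (X i)) -> (forall i, has_ubound (maxrv_set P (X i))) ->
  \forall t \ae P, Ssum X t <= \sum_(i < n) Mx P X i.
Proof.
move=> mX ubX; have /filter_forall : forall i, \forall t \ae P, X i t <= Mx P X i.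
  by move=> i; exact: ae_le_maxrv.
by apply: filterS => t Xt; apply: ler_sum => i _.
Qed.

End MaxOfRandomVariable.

Section IntegralWithoutMeasurability.
Context {R : realType} {d : measure_display} {T : measurableType d}.
Variable mu : {measure set T -> \bar R}.
Local Open Scope ereal_scope.

Lemma ge0_le_integral_nonmeasurable (f g : T -> \bar R) :
  (forall t, 0 <= f t) -> (forall t, f t <= g t) ->
  \int[mu]_t f t <= \int[mu]_t g t.
Proof.
move=> f0 fg; rewrite !ge0_integralTE // => [|t]; last exact: le_trans (f0 t) (fg t).
apply: ereal_sup_le => _ [h hf <-]; exists h => //= t.
exact: le_trans (hf t) (fg t).
Qed.

Lemma integral_ae_eq_bounded (f g : T -> R) (B : R) : measurable_fun setT g ->
  (forall t, (0 <= f t <= B)%R) -> (\forall t \ae mu, f t = g t) ->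
  \int[mu]_t (f t)%:E = \int[mu]_t (g t)%:E.
Proof.
move=> mg fB [N [mN muN0 fgN]].
have fg t : ~ N t -> f t = g t by move=> Nt; apply: contrapT => /fgN.
pose lo t := (g t * \1_(~` N) t)%R.
pose hi t := (lo t + B * \1_N t)%R.
have mlo : measurable_fun setT lo.
  by apply: measurable_funM => //; exact/measurable_indic/measurableC.
have mhi : measurable_fun setT hi.
  apply: measurable_funD => //; apply: measurable_funM; first exact: measurable_cst.
  exact: measurable_indic.
have aeN : \forall t \ae mu, setT t -> ~ N t.
  by exists N; split => // t /=; apply: contra_notP => Nt _.
have lo_g : \int[mu]_t (lo t)%:E = \int[mu]_t (g t)%:E.
  apply: ae_eq_integral => //; [exact/measurable_EFinP|exact/measurable_EFinP|].
  by apply: filterS aeN => t /[apply] Nt; rewrite /lo indicE mem_set // mulr1.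
have hi_g : \int[mu]_t (hi t)%:E = \int[mu]_t (g t)%:E.
  apply: ae_eq_integral => //; [exact/measurable_EFinP|exact/measurable_EFinP|].
  apply: filterS aeN => t /[apply] Nt.
  by rewrite /hi /lo !indicE mem_set // memNset // mulr1 mulr0 addr0.
have lo0 t : (0 <= lo t)%R.
  rewrite /lo indicE; have [Nt|Nt] := pselect (N t); first by rewrite memNset ?mulr0.
  by rewrite mem_set // mulr1 -fg //; case/andP: (fB t).
have lo_f t : (lo t <= f t)%R.
  rewrite /lo indicE; have [Nt|Nt] := pselect (N t); last by rewrite mem_set // mulr1 fg.
  by rewrite memNset ?mulr0 //; case/andP: (fB t).
have f_hi t : (f t <= hi t)%R.
  rewrite /hi /lo !indicE; have [Nt|Nt] := pselect (N t).
    by rewrite memNset ?mem_set // mulr0 mulr1 add0r; case/andP: (fB t).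
  by rewrite mem_set ?memNset // mulr1 mulr0 addr0 fg.
apply/eqP; rewrite eq_le; apply/andP; split.
- rewrite -hi_g; apply: ge0_le_integral_nonmeasurable => t; rewrite lee_fin //.
  by case/andP: (fB t).
- by rewrite -lo_g; apply: ge0_le_integral_nonmeasurable => t; rewrite lee_fin.
Qed.

End IntegralWithoutMeasurability.

Section Clamp.
Context {R : realDomainType}.

Definition clamp (a b x : R) := Num.min (Num.max x a) b.

Lemma clamp_nondecreasing a b : {homo clamp a b : x y / x <= y}.
Proof. by move=> x y xy; apply: le_min2 => //; exact: le_max2. Qed.

Lemma clamp_itv a b x : a <= b -> a <= clamp a b x <= b.
Proof. by move=> ab; rewrite le_min ab ge_min le_max lexx orbT lexx orbT. Qed.

Lemma clamp_id a b x : a <= x <= b -> clamp a b x = x.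
Proof. by case/andP=> ax xb; rewrite /clamp max_l // min_l. Qed.

End Clamp.

Lemma fin_num_lee_sum_eq {R : realDomainType} (I : finType) (F G : I -> \bar R) :
  (forall i, F i \is a fin_num) -> (forall i, G i \is a fin_num) ->
  (forall i, (F i <= G i)%E) -> (\sum_i F i = \sum_i G i)%E -> forall i, F i = G i.
Proof.
move=> Ffin Gfin FG sumFG i.
have /psumr_eq0P gap0 : \sum_i (fine (G i) - fine (F i)) = 0.
  rewrite sumrB; apply/eqP; rewrite subr_eq0; apply/eqP/EFin_inj; rewrite -!sumEFin.
  by rewrite (eq_bigr _ (fun j _ => fineK (Ffin j))) (eq_bigr _ (fun j _ => fineK (Gfin j))) sumFG.
rewrite -(fineK (Ffin i)) -(fineK (Gfin i)); congr EFin; apply/eqP.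
by rewrite eq_sym -subr_eq0 gap0 // => j _; rewrite subr_ge0 fine_le.
Qed.

Section ScaledBalance.
Context {R : realType} {d : measure_display} {T : measurableType d}.
Context {P : probability T R} {n : nat} {X : 'I_n -> T -> R} {v : 'I_n -> R -> R}.
Hypothesis X_measurable : forall i, measurable_fun setT (X i).
Hypothesis X_ge0 : forall i t, 0 <= X i t.
Hypothesis Mx_gt0 : forall i, 0 < Mx P X i.
Hypothesis Ssum_le_ae : \forall t \ae P, Ssum X t <= \sum_(i < n) Mx P X i.
Hypothesis I_nondecreasing : forall i (a b : \bar R),
  (0 <= a)%E -> (a <= b)%E -> I_ P X v i a <= I_ P X v i b.

Local Notation K := (\sum_(i < n) Mx P X i).
Local Notation I := (I_ P X v).

Context {alpha : 'I_n -> R} {J : R -> \bar R}.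
Hypothesis alpha_gt0 : forall i, 0 < alpha i.
Hypothesis J_phi1 : forall s, 0 <= s <= K ->
  (0 <= J s)%E /\ \sum_(i < n) I i (J s * ((alpha i)^-1)%:E)%E = s.

Lemma phi1_nondecreasing s1 s2 : 0 <= s1 -> s1 <= s2 -> s2 <= K -> (J s1 <= J s2)%E.
Proof.
move=> s10 s12 s2K; rewrite leNgt; apply/negP => J21.
have [_ sum1] := J_phi1 s1 (ltac:(by rewrite s10 (le_trans s12 s2K))).
have [J20 sum2] := J_phi1 s2 (ltac:(by rewrite (le_trans s10 s12) s2K)).
suff s21 : s2 <= s1.
  have /eqP s1E : s1 == s2 by rewrite eq_le s12 s21.
  by move: J21; rewrite s1E ltxx.
rewrite -sum1 -sum2; apply: ler_sum => i _; apply: I_nondecreasing.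
  by rewrite mule_ge0 // lee_fin invr_ge0 ltW.
by rewrite lee_wpmul2r ?lee_fin ?invr_ge0 ?ltW.
Qed.

Lemma phi1_neq0 : 0 < K -> ~ (forall s, 0 <= s <= K -> J s = 0%E).
Proof.
move=> K0 J0; have K_itv : 0 <= K <= K by rewrite (ltW K0) lexx.
have zero_itv : (0 : R) <= 0 <= K by rewrite lexx (ltW K0).
have := (J_phi1 _ K_itv).2; rewrite J0 // -(J0 0) // (J_phi1 _ zero_itv).2 => K_eq0.
by move: K0; rewrite -K_eq0 ltxx.
Qed.

Let K_ge0 : 0 <= K.
Proof. by rewrite sumr_ge0 // => i _; rewrite ltW. Qed.

Let Ssum_ge0 t : 0 <= Ssum X t.
Proof. by rewrite sumr_ge0. Qed.

Let measurable_Ssum : measurable_fun setT (Ssum X).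
Proof. exact: measurable_sum. Qed.

Let J_clamp_ge0 s : (0 <= J (clamp 0 K s))%E.
Proof. by have [] := J_phi1 _ (clamp_itv _ _ s K_ge0). Qed.

Let J_clamp_nondecreasing : {homo J \o clamp 0 K : x y / x <= y >-> (x <= y)%E}.
Proof.
move=> x y /(clamp_nondecreasing 0 K) xy /=.
have [x0 _] := andP (clamp_itv 0 K x K_ge0).
have [_ yK] := andP (clamp_itv 0 K y K_ge0).
exact: phi1_nondecreasing _ _ x0 xy yK.
Qed.

(* J is only constrained on [0, K]. Clamping S into [0, K] makes the integrand a
   nondecreasing, hence measurable, function of S, and changes it only on the null
   set where S > K. *)
Let share i c s := I i (J (clamp 0 K s) * (c^-1)%:E)%E.

Let share_bound i c s : 0 <= share i c s <= Mx P X i.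
Proof. exact/Ibar_bound/ltW. Qed.

Let share_le i c1 c2 s1 s2 : 0 < c2 -> c2 <= c1 -> s1 <= s2 ->
  share i c1 s1 <= share i c2 s2.
Proof.
move=> c20 c21 s12; have c10 := lt_le_trans c20 c21.
apply: I_nondecreasing; first by rewrite mule_ge0 // lee_fin invr_ge0 ltW.
apply: (@le_trans _ _ (J (clamp 0 K s1) * (c2^-1)%:E)%E).
  by rewrite lee_wpmul2l // lee_fin lef_pV2.
apply: lee_wpmul2r; first by rewrite lee_fin invr_ge0 ltW.
exact: J_clamp_nondecreasing.
Qed.

Let measurable_share i c : 0 < c -> measurable_fun setT (share i c).
Proof. by move=> c0; apply: nondecreasing_measurable => // x y; exact: share_le. Qed.

Let clamped_expectation i c := (\int[P]_t (share i c (Ssum X t))%:E)%E.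

Let expectation_clamped i c : 0 < c ->
  (\int[P]_t (I i (J (Ssum X t) * (c^-1)%:E))%:E)%E = clamped_expectation i c.
Proof.
move=> c0; apply: (integral_ae_eq_bounded _ _ _ (Mx P X i)) => [|t|].
- by apply: measurableT_comp; [exact: measurable_share | exact: measurable_Ssum].
- exact/Ibar_bound/ltW.
- by apply: filterS Ssum_le_ae => t SK; rewrite /share clamp_id ?Ssum_ge0.
Qed.

Let clamped_expectation_nonincreasing i c1 c2 : 0 < c1 -> c1 <= c2 ->
  (clamped_expectation i c2 <= clamped_expectation i c1)%E.
Proof.
move=> c10 c12; apply: ge0_le_integral_nonmeasurable => t; rewrite lee_fin.
  by case/andP: (share_bound i c2 (Ssum X t)).
exact: share_le.
Qed.

Let clamped_expectation_fin_num i c : clamped_expectation i c \is a fin_num.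
Proof.
rewrite ge0_fin_numE; last by apply: integral_ge0 => t _; case/andP: (share_bound i c (Ssum X t)).
have : (clamped_expectation i c <= (Mx P X i)%:E)%E.
  apply: (@le_trans _ _ (\int[P]_t (cst (Mx P X i)%:E) t)%E).
    apply: ge0_le_integral_nonmeasurable => t; rewrite lee_fin;
    by case/andP: (share_bound i c (Ssum X t)).
  by rewrite integral_cst // -[leRHS]mule1 lee_wpmul2l ?lee_fin ?(ltW (Mx_gt0 i)) ?probability_le1.
by move/le_lt_trans; apply; exact: ltey.
Qed.

Let sum_clamped_expectation :
  (\sum_i clamped_expectation i (alpha i) = \sum_i \int[P]_t (X i t)%:E)%E.
Proof.
rewrite -ge0_integral_sum //; last first.
- by move=> i t _; rewrite lee_fin; case/andP: (share_bound i (alpha i) (Ssum X t)).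
- by move=> i; apply/measurable_EFinP/measurableT_comp; [exact: measurable_share|].
under eq_integral do rewrite sumEFin.
rewrite -ge0_integral_sum //; last first.
- by move=> i t _; rewrite lee_fin.
- by move=> i; exact/measurable_EFinP.
under [RHS]eq_integral do rewrite sumEFin.
rewrite (eq_integral (fun t => (clamp 0 K (Ssum X t))%:E)); last first.
  by move=> t _; congr EFin; exact: (J_phi1 _ (clamp_itv _ _ _ K_ge0)).2.
apply: (integral_ae_eq_bounded _ _ _ K measurable_Ssum) => [t|]; first exact: clamp_itv.
by apply: filterS Ssum_le_ae => t SK; rewrite clamp_id ?Ssum_ge0.
Qed.

Lemma phi_scaled_balance lambda : 0 < lambda ->
  (forall i, expect_eq P X v J i (lambda * alpha i)) ->
  forall i, expect_eq P X v J i (alpha i).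
Proof.
move=> lambda0 balanced.
have Elambda i : clamped_expectation i (lambda * alpha i) = (\int[P]_t (X i t)%:E)%E.
  by rewrite -expectation_clamped ?mulr_gt0 //; exact: balanced.
suff Ealpha i : clamped_expectation i (alpha i) = clamped_expectation i (lambda * alpha i).
  by move=> i; rewrite /expect_eq expectation_clamped // Ealpha Elambda.
have sums : (\sum_i clamped_expectation i (alpha i) =
             \sum_i clamped_expectation i (lambda * alpha i))%E.
  by rewrite sum_clamped_expectation; apply: eq_bigr => j _; rewrite Elambda.
have [lambda_ge1|lambda_lt1] := leP 1 lambda.
- apply/esym; move: i; apply: fin_num_lee_sum_eq => // j.
  by apply: clamped_expectation_nonincreasing => //; rewrite ler_peMl // ltW.
- move: i; apply: fin_num_lee_sum_eq => // j.
  by apply: clamped_expectation_nonincreasing; rewrite ?mulr_gt0 // ler_piMl // ltW.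
Qed.

End ScaledBalance.

Theorem proposition3p8 (R : realType) (d : measure_display) (T : measurableType d)
  (P : probability T R) (n : nat) (X : 'I_n -> T -> R) (v : 'I_n -> R -> R)
  (hn : (0 < n)%N)
  (hXmeas : forall i, measurable_fun setT (X i))
  (hXnonneg : forall i t, 0 <= X i t)
  (hXnonconst : forall i, ~ (exists c : R, P [set t | X i t = c] = 1%E))
  (hXmax : forall i, has_ubound (maxrv_set P (X i)))
  (hv : forall i, disutility (v i) (Mx P X i))
  (alpha : 'I_n -> R) (lambda : R)
  (halpha : forall i, 0 < alpha i)
  (heig : phi_graph P X v alpha (fun i => lambda * alpha i)) :
  lambda = 1.
Proof.
set i0 := Ordinal hn.
have Mx_gt0 i : 0 < Mx P X i.
  exact: maxrv_gt0 P (X i) (hXmeas i) (hXmax i) (hXnonneg i) (hXnonconst i).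
have I_nondecreasing i := disutility_Ibar_nondecreasing (hv i) (Mx_gt0 i).
have K_gt0 : 0 < \sum_(i < n) Mx P X i.
  by rewrite (bigD1 i0) //= ltr_pwDl ?sumr_ge0 // => i _; rewrite ltW.
have [J [[/(_ halpha) J_phi1 _] [_ J_phi2]]] := heig.
have /J_phi2 beta_spec := phi1_neq0 J_phi1 K_gt0.
have lambda_gt0 : 0 < lambda by have [] := beta_spec i0; rewrite pmulr_lgt0.
have alpha_balanced := phi_scaled_balance hXmeas hXnonneg Mx_gt0
  (ae_Ssum_le_sum_maxrv P hXmeas hXmax) I_nondecreasing halpha J_phi1 _ lambda_gt0
  (fun i => (beta_spec i).2.1).
have [_ [_ beta_unique]] := beta_spec i0.
have := beta_unique _ (halpha i0) (alpha_balanced i0).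
by rewrite -[X in X = _]mul1r => /(mulIf (lt0r_neq0 (halpha i0))) <-.
Qed.
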